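(* Let $G$ be a finite simple undirected graph and let $r<s$ be positive integers. Let $\mathcal{F}$ be the family of all $k$-$(r,s)$-nuclei of $G$, taken over all positive integers $k$ (each nucleus regarded as a set of $s$-cliques of $G$). Then $\mathcal{F}$ is a laminar family: for any $\mathcal{S},\mathcal{S}'\in\mathcal{F}$, the intersection $\mathcal{S}\cap\mathcal{S}'$ is either empty, or $\mathcal{S}\subseteq\mathcal{S}'$, or $\mathcal{S}'\subseteq\mathcal{S}$.
   Context: A $K_r$ denotes an $r$-clique (a set of $r$ pairwise adjacent vertices) of $G$. For a set $\mathcal{S}$ of $K_s$s of $G$ (with $r<s$): $K_r(\mathcal{S})$ is the set of $K_r$s contained in some $S\in\mathcal{S}$; the $\mathcal{S}$-degree of $R\in K_r(\mathcal{S})$ is the number of $S\in\mathcal{S}$ with $R\subseteq S$; two $K_r$s $R,R'$ are $\mathcal{S}$-connected if there is a sequence $R=R_1,R_2,\dots,R_m=R'$ in $K_r(\mathcal{S})$ such that for each $i$ some $S\in\mathcal{S}$ contains $R_i\cup R_{i+1}$. For positive integers $k$ and $r<s$, a $k$-$(r,s)$-nucleus is a set $\mathcal{S}$ of $K_s$s of $G$ that is maximal (under inclusion) among sets of $K_s$s satisfying: (i) every $R\in K_r(\mathcal{S})$ has $\mathcal{S}$-degree at least $k$; (ii) any $R,R'\in K_r(\mathcal{S})$ are $\mathcal{S}$-connected. *)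

From mathcomp Require Import all_boot.
Set Implicit Arguments. Unset Strict Implicit. Unset Printing Implicit Defensive.

Section Nucleus.
Variables (T : finType) (e : rel T).

Definition is_clique (r : nat) (A : {set T}) : bool :=
  (#|A| == r) && [forall x in A, forall y in A, (x != y) ==> e x y].

Definition Kr (r : nat) (S : {set {set T}}) : {set {set T}} :=
  [set R : {set T} | is_clique r R && [exists X in S, R \subset X]].

Definition sdeg (S : {set {set T}}) (R : {set T}) : nat :=
  #|[set X in S | R \subset X]|.

Definition sstep (r : nat) (S : {set {set T}}) : rel {set T} :=
  fun R R' => [&& R \in Kr r S, R' \in Kr r S & [exists X in S, (R :|: R') \subset X]].

Definition sconnected (r : nat) (S : {set {set T}}) (R R' : {set T}) : bool :=
  connect (sstep r S) R R'.

Definition nucleus_cond (k r s : nat) (S : {set {set T}}) : Prop :=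
  [/\ forall X, X \in S -> is_clique s X,
      forall R, R \in Kr r S -> k <= sdeg S R
    & forall R R', R \in Kr r S -> R' \in Kr r S -> sconnected r S R R'].

Definition nucleus (k r s : nat) (S : {set {set T}}) : Prop :=
  nucleus_cond k r s S /\
  (forall S', nucleus_cond k r s S' -> S \subset S' -> S' = S).

End Nucleus.

From mathcomp Require Import all_boot.
Set Implicit Arguments. Unset Strict Implicit. Unset Printing Implicit Defensive.

(* If two nuclei S, S' with k <= k' share a K_s, they share a K_r inside it, so
   S :|: S' is still r-connected, every K_r of it has degree at least k, and it
   consists of K_s's: it satisfies the conditions for k.  Maximality of S then
   forces S :|: S' = S, i.e. S' \subset S. *)

Lemma exists_subset_card (T : finType) (A : {set T}) n :
  n <= #|A| -> exists2 B : {set T}, B \subset A & #|B| = n.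
Proof.
move=> le_nA; exists [set x in take n (enum A)].
  by apply/subsetP=> x; rewrite inE => /mem_take; rewrite mem_enum.
rewrite cardsE (card_uniqP _) ?take_uniq ?enum_uniq // size_take -cardE.
by case: ltngtP le_nA => // ->.
Qed.

Section Nuclei.
Variables (T : finType) (e : rel T).

Lemma clique_subset s (X R : {set T}) :
  is_clique e s X -> R \subset X -> is_clique e #|R| R.
Proof.
case/andP=> _ /forall_inP cliqueX sRX; rewrite /is_clique eqxx /=.
apply/forall_inP=> x xR; apply/forall_inP=> y yR.
exact: (forall_inP (cliqueX x (subsetP sRX x xR))) y (subsetP sRX y yR).
Qed.

Lemma Kr_subset r (S S' : {set {set T}}) :
  S \subset S' -> Kr e r S \subset Kr e r S'.
Proof.
move=> sSS'; apply/subsetP=> R; rewrite !inE => /andP[-> /exists_inP[X XS sRX]].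
by apply/exists_inP; exists X; rewrite ?(subsetP sSS').
Qed.

Lemma KrU r (S S' : {set {set T}}) :
  Kr e r (S :|: S') = Kr e r S :|: Kr e r S'.
Proof.
apply/setP=> R; rewrite !inE -andb_orr; congr (_ && _).
apply/exists_inP/orP=> [[X] | [] /exists_inP[X XS sRX]].
- by rewrite inE => /orP[] XS sRX; [left | right]; apply/exists_inP; exists X.
- by exists X; rewrite // inE XS.
- by exists X; rewrite // inE XS orbT.
Qed.

Lemma sdeg_subset (S S' : {set {set T}}) R :
  S \subset S' -> sdeg S R <= sdeg S' R.
Proof.
move=> sSS'; apply/subset_leq_card/subsetP=> X.
by rewrite !inE => /andP[/(subsetP sSS') -> ->].
Qed.

Lemma sconnected_subset r (S S' : {set {set T}}) R R' :
  S \subset S' -> sconnected e r S R R' -> sconnected e r S' R R'.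
Proof.
move=> sSS'; apply: connect_sub => R1 R2 /and3P[R1S R2S /exists_inP[X XS sX]].
apply: connect1; apply/and3P; split; try exact: (subsetP (Kr_subset r sSS')).
by apply/exists_inP; exists X; rewrite ?(subsetP sSS').
Qed.

Lemma nucleus_condU k k' r s (S S' : {set {set T}}) R0 :
  k <= k' -> R0 \in Kr e r S -> R0 \in Kr e r S' ->
  nucleus_cond e k r s S -> nucleus_cond e k' r s S' ->
  nucleus_cond e k r s (S :|: S').
Proof.
move=> le_kk' R0S R0S' [cliqueS degS connS] [cliqueS' degS' connS'].
have sSU : S \subset S :|: S' := subsetUl S S'.
have sS'U : S' \subset S :|: S' := subsetUr S S'.
have viaR0 R : R \in Kr e r S :|: Kr e r S' ->
    sconnected e r (S :|: S') R R0 /\ sconnected e r (S :|: S') R0 R.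
  rewrite inE => /orP[RS | RS'].
    by split; apply: (sconnected_subset sSU); apply: connS.
  by split; apply: (sconnected_subset sS'U); apply: connS'.
split.
- by move=> X; rewrite inE => /orP[/cliqueS | /cliqueS'].
- move=> R; rewrite KrU inE => /orP[RS | RS'].
    exact: leq_trans (degS R RS) (sdeg_subset R sSU).
  exact: leq_trans le_kk' (leq_trans (degS' R RS') (sdeg_subset R sS'U)).
- move=> R R'; rewrite !KrU => /viaR0[toR0 _] /viaR0[_ fromR0].
  exact: connect_trans toR0 fromR0.
Qed.

Lemma common_Kr r s (S S' : {set {set T}}) X :
  r <= s -> is_clique e s X -> X \in S -> X \in S' ->
  exists2 R0, R0 \in Kr e r S & R0 \in Kr e r S'.
Proof.
move=> le_rs cliqueX XS XS'.
have [R0 sR0X cardR0] : exists2 R0 : {set T}, R0 \subset X & #|R0| = r.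
  by apply: exists_subset_card; case/andP: cliqueX => /eqP ->.
have cliqueR0 : is_clique e r R0 by rewrite -cardR0; apply: clique_subset cliqueX sR0X.
by exists R0; rewrite inE cliqueR0; apply/exists_inP; exists X.
Qed.

Lemma nucleus_meet_subset k k' r s (S S' : {set {set T}}) :
  r <= s -> k <= k' -> nucleus e k r s S -> nucleus e k' r s S' ->
  S :&: S' != set0 -> S' \subset S.
Proof.
move=> le_rs le_kk' [condS maxS] [condS' _] /set0Pn[X /setIP[XS XS']].
have [cliqueS _ _] := condS.
have [R0 R0S R0S'] := common_Kr le_rs (cliqueS X XS) XS XS'.
rewrite -(maxS _ (nucleus_condU le_kk' R0S R0S' condS condS') (subsetUl S S')).
exact: subsetUr.
Qed.

End Nuclei.

Theorem lemma1 (T : finType) (e : rel T)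
  (e_sym : symmetric e) (e_irr : irreflexive e)
  (r s : nat) (r_pos : 0 < r) (r_lt_s : r < s)
  (k k' : nat) (k_pos : 0 < k) (k'_pos : 0 < k')
  (S S' : {set {set T}}) :
  nucleus e k r s S -> nucleus e k' r s S' ->
  S :&: S' = set0 \/ S \subset S' \/ S' \subset S.
Proof.
move=> nucS nucS'; have le_rs := ltnW r_lt_s.
have [-> | meet] := eqVneq (S :&: S') set0; [by left | right].
have [le_kk' | /ltnW le_k'k] := leqP k k'.
  by right; apply: nucleus_meet_subset le_rs le_kk' nucS nucS' meet.
by left; apply: nucleus_meet_subset le_rs le_k'k nucS' nucS _; rewrite setIC.
Qed.
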